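(* If $X$ is a locally Menger Hausdorff $P$-space, then $w(X)\leq nw(X)^{\aleph_0}$.
   Context: $w(X)$ is the smallest cardinality of a base of $X$. A network for $X$ is a family $\mathcal{N}$ of subsets of $X$ such that for every $x\in X$ and every neighbourhood $U$ of $x$ there is $A\in\mathcal{N}$ with $x\in A\subseteq U$; $nw(X)$ is the smallest cardinality of a network for $X$. A space $X$ is Menger if for each sequence $(\mathcal{U}_n)$ of open covers of $X$ there is a sequence $(\mathcal{V}_n)$ with each $\mathcal{V}_n$ a finite subset of $\mathcal{U}_n$ and $\bigcup_{n}\bigcup\mathcal{V}_n=X$. A space $X$ is locally Menger if for each $x\in X$ there exist an open set $U$ and a Menger subspace $Y$ of $X$ with $x\in U\subseteq Y$. A $P$-space is a space in which every countable intersection of open sets is open. *)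

From HB Require Import structures.
From mathcomp Require Import all_boot all_order.
From mathcomp Require Import all_classical all_reals topology.
Set Implicit Arguments. Unset Strict Implicit. Unset Printing Implicit Defensive.
Local Open Scope classical_set_scope.

Definition is_base {X : topologicalType} (B : set (set X)) : Prop :=
  (forall b, B b -> open b) /\
  (forall (x : X) (U : set X), open U -> U x -> exists2 b, B b & b x /\ b `<=` U).

Definition is_network {X : topologicalType} (N : set (set X)) : Prop :=
  forall (x : X) (U : set X), nbhs x U -> exists2 A, N A & A x /\ A `<=` U.

Definition P_space (X : topologicalType) : Prop :=
  forall U : nat -> set X, (forall n, open (U n)) -> open (\bigcap_n U n).

Definition Menger_set {X : topologicalType} (Y : set X) : Prop :=
  forall U : nat -> set (set X),
    (forall n, (forall u, U n u -> open u) /\ Y `<=` \bigcup_(u in U n) u) ->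
    exists V : nat -> set (set X),
      (forall n, finite_set (V n) /\ V n `<=` U n) /\
      Y `<=` \bigcup_n \bigcup_(v in V n) v.

Definition locally_Menger (X : topologicalType) : Prop :=
  forall x : X, exists U : set X, exists Y : set X,
    [/\ open U, U x, U `<=` Y & Menger_set Y].

From HB Require Import structures.
From mathcomp Require Import all_boot all_order.
From mathcomp Require Import all_classical all_reals topology.
Local Open Scope classical_set_scope.
Local Open Scope card_scope.

(* Every base element is coded by a sequence of network elements
   [a0, a1, b1, a2, b2, ...]: it is an open neighbourhood of a0 lying inside a
   Menger set, intersected with the open sets P(a_m, b_m) of chosen disjoint
   open pairs (P, Q) with a_m in P and b_m in Q.  Such a countable intersection
   is open in a P-space.  Given x in an open U, the sets Q(a, b) with x in a,
   together with U, cover the Menger set by the Hausdorff property, so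
   countably many of them suffice; the corresponding pairs (a_m, b_m) give a
   coded set containing x which misses every Q(a_m, b_m), hence lies in U. *)

(* Menger's property for the constant sequence of covers makes Y Lindelöf. *)
Lemma Menger_set_seq_subcover {X : topologicalType} {Y : set X} {T : choiceType} {D : set T}
    {u : T -> set X} (i0 : T) :
  Menger_set Y -> D i0 -> (forall i, D i -> open (u i)) ->
  Y `<=` \bigcup_(i in D) u i ->
  exists s : nat -> T, (forall n, D (s n)) /\ Y `<=` \bigcup_n u (s n).
Proof.
move=> MY Di0 uo Ycov.
have [V [VF Ycov']] : exists V : nat -> set (set X),
    (forall n, finite_set (V n) /\ V n `<=` u @` D) /\
    Y `<=` \bigcup_n \bigcup_(v in V n) v.
  apply: MY => n; split => [_ [i Di <-]|y /Ycov [i Di uiy]]; first exact: uo.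
  by exists (u i) => //; exists i.
have cV : countable (\bigcup_n V n).
  apply: bigcup_countable => [|n _]; first exact: countableP.
  exact/finite_set_countable/(VF n).1.
have /pcard_surjP[g gsurj] := cV.
exists (fun n => xget i0 [set i | D i /\ u i = g n]); split => [n|y Yy].
  by case: xgetP => [i _ []|].
have [n _ [v Vv vy]] := Ycov' y Yy.
have [k _ gk] := gsurj v (ex_intro2 _ _ n I Vv).
have [i Di uiv] := (VF n).2 v Vv.
exists k => //; case: xgetP => [j -> [_ ->]|/(_ i)[]]; first by rewrite gk.
by split; rewrite // uiv gk.
Qed.

Definition interleave {T : Type} (a0 : T) (s : nat -> T * T) (k : nat) : T :=
  if k is k'.+1 then (if odd k' then (s k'./2).2 else (s k'./2).1) else a0.

Lemma interleave_odd {T : Type} (a0 : T) s m :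
  interleave a0 s m.*2.+1 = (s m).1.
Proof. by rewrite /= odd_double doubleK. Qed.

Lemma interleave_even {T : Type} (a0 : T) s m :
  interleave a0 s m.*2.+2 = (s m).2.
Proof. by rewrite /= odd_double /= uphalf_double. Qed.

Section CodedBase.
Context {X : topologicalType}.

Definition separates (a b : set X) (PQ : set X * set X) : Prop :=
  [/\ open PQ.1, open PQ.2, a `<=` PQ.1, b `<=` PQ.2 & PQ.1 `&` PQ.2 = set0].

(* Falls back on (setT, set0), which satisfies everything but [b `<=` Q]. *)
Definition separation (a b : set X) : set X * set X :=
  xget (setT, set0) (separates a b).

Lemma open_separation1 a b : open (separation a b).1.
Proof. by rewrite /separation; case: xgetP => [? _ []|_]; last exact: openT. Qed.

Lemma open_separation2 a b : open (separation a b).2.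
Proof. by rewrite /separation; case: xgetP => [? _ []|_]; last exact: open0. Qed.

Lemma sub_separation1 a b : a `<=` (separation a b).1.
Proof. by rewrite /separation; case: xgetP => [? _ []|]. Qed.

Lemma separation_disjoint a b : (separation a b).1 `&` (separation a b).2 = set0.
Proof. by rewrite /separation; case: xgetP => [? _ []|_]; last exact: setI0. Qed.

Lemma sub_separation2 a b PQ : separates a b PQ -> b `<=` (separation a b).2.
Proof. by move=> abPQ; rewrite /separation; case: xgetP => [? _ []|/(_ PQ)]. Qed.

Definition Menger_nbhd (A : set X) : set X :=
  xget setT [set V | [/\ open V, A `<=` V & exists2 Y, V `<=` Y & Menger_set Y]].

Lemma open_Menger_nbhd A : open (Menger_nbhd A).
Proof. by rewrite /Menger_nbhd; case: xgetP => [? _ []|_]; last exact: openT. Qed.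

Lemma sub_Menger_nbhd A : A `<=` Menger_nbhd A.
Proof. by rewrite /Menger_nbhd; case: xgetP => [? _ []|]. Qed.

Lemma Menger_nbhd_sub_Menger {A V Y : set X} :
  open V -> A `<=` V -> V `<=` Y -> Menger_set Y ->
  exists2 Y', Menger_nbhd A `<=` Y' & Menger_set Y'.
Proof.
move=> oV AV VY MY; rewrite /Menger_nbhd.
by case: xgetP => [? _ []|/(_ V)[]] //; split => //; exists Y.
Qed.

Definition coded_open (f : nat -> set X) : set X :=
  Menger_nbhd (f 0) `&` \bigcap_m (separation (f m.*2.+1) (f m.*2.+2)).1.

Lemma open_coded_open f : P_space X -> open (coded_open f).
Proof.
move=> PX; apply: openI; first exact: open_Menger_nbhd.
apply: (PX (fun m => (separation (f m.*2.+1) (f m.*2.+2)).1)) => m.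
exact: open_separation1.
Qed.

Lemma hausdorff_separation_cover {N : set (set X)} {x : X} {U : set X} :
  hausdorff_space X -> is_network N -> U x ->
  [set: X] `<=` \bigcup_(p in [set p | [/\ N p.1, p.1 x & N p.2]])
                  (U `|` (separation p.1 p.2).2).
Proof.
move=> hX hN Ux y _; have [Uy|Uy] := pselect (U y).
  have [a Na [ax _]] := hN x setT filterT.
  by exists (a, a) => //; left.
move: hX; rewrite open_hausdorff => /(_ x y)[].
  by apply/eqP => xy; apply: Uy; rewrite -xy.
move=> [G H] /= [/set_mem xG /set_mem yH] [oG oH /eqP GH].
have [a Na [ax aG]] := hN x G (open_nbhs_nbhs (conj oG xG)).
have [b Nb [yb bH]] := hN y H (open_nbhs_nbhs (conj oH yH)).
by exists (a, b) => //; right; apply: (@sub_separation2 _ _ (G, H)).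
Qed.

Lemma coded_open_base {N : set (set X)} {x : X} {U : set X} :
  hausdorff_space X -> locally_Menger X -> is_network N -> open U -> U x ->
  exists f, [/\ forall n, N (f n), coded_open f x & coded_open f `<=` U].
Proof.
move=> hX lM hN oU Ux.
have [V0 [Y0 [oV0 V0x V0Y0 MY0]]] := lM x.
have [a0 Na0 [a0x a0V0]] := hN x V0 (open_nbhs_nbhs (conj oV0 V0x)).
have [Y MnY MY] := Menger_nbhd_sub_Menger oV0 a0V0 V0Y0 MY0.
have [s [Ds Ycov]] := Menger_set_seq_subcover (a0, a0) MY (And3 Na0 a0x Na0)
  (fun p _ => openU oU (open_separation2 p.1 p.2))
  (subset_trans (@subsetT _ Y) (hausdorff_separation_cover hX hN Ux)).
exists (interleave a0 s); split.
- by case=> [|k] //=; case: ifP => _; case: (Ds k./2).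
- split=> [|m _]; first exact: sub_Menger_nbhd.
  rewrite interleave_odd interleave_even.
  by apply: sub_separation1; case: (Ds m).
- move=> y [/MnY /Ycov [m _ [//|Qy]] Py]; have := Py m I.
  rewrite interleave_odd interleave_even => {}Py.
  suff : (set0 : set X) y by [].
  by rewrite -(separation_disjoint (s m).1 (s m).2).
Qed.

End CodedBase.

Theorem theorem3p11 (X : topologicalType) :
  hausdorff_space X -> P_space X -> locally_Menger X ->
  forall N : set (set X), is_network N ->
  exists B : set (set X),
    is_base B /\ B #<= [set f : nat -> set X | forall n, N (f n)].
Proof.
move=> hX PX lM N hN.
exists (coded_open @` [set f : nat -> set X | forall n, N (f n)]).
split; last exact: card_image_le.
split=> [_ [f _ <-]|x U oU Ux]; first exact: open_coded_open.
have [f [Nf fx fU]] := coded_open_base hX lM hN oU Ux.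
by exists (coded_open f) => //; exists f.
Qed.
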